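(* Let $u_x$ be the value at a point $x$ of a curvature-type tensor on a Hermitian manifold $(M,g,J)$ with $u_x\ge0$, and suppose $u_x(\xi,\bar\xi,\eta,\bar\eta)=0$ for some $\xi,\eta\in T^{1,0}_xM$. Let $e_1,\dots,e_n$ be an orthonormal basis of $T^{1,0}_xM$. Then $$\sum_{i,j}\Big(u_x(\xi,\bar\xi,e_i,\bar e_j)u_x(e_j,\bar e_i,\eta,\bar\eta)-u_x(\xi,\bar e_i,\eta,\bar e_j)u_x(e_j,\bar\xi,e_i,\bar\eta)\Big)\ge0.$$
   Context: A Hermitian metric $g$ on a complex manifold $(M,J)$ is a $J$-invariant Riemannian metric extended complex-bilinearly to $T_{\mathbb C}M=T^{1,0}M\oplus T^{0,1}M$; orthonormality of $e_i$ is with respect to the Hermitian inner product $g(\cdot,\bar\cdot)$ on $T^{1,0}_xM$. A real tensor $u\in(T^*M)^{\otimes4}$ is of curvature type if $u(X,Y,Z,W)=-u(Y,X,Z,W)=-u(X,Y,W,Z)$ and $u(JX,JY,Z,W)=u(X,Y,JZ,JW)=u(X,Y,Z,W)$; it is extended complex-multilinearly. $u_x\ge0$ means $u_x(\xi,\bar\xi,\eta,\bar\eta)\ge0$ for all $\xi,\eta\in T^{1,0}_xM$. *)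

(* Pointwise (linear-algebraic) model of the statement:
   T^{1,0}_x M  is modelled by 'cV[C]_n, C a numClosedFieldType (e.g. algC),
   the Hermitian metric by a Hermitian positive-definite matrix H, and the
   complex-multilinear extension of a real curvature-type tensor u_x by its
   restriction  U a b c d := u_x(a, \bar b, c, \bar d)  (a,b,c,d in T^{1,0}). *)
From HB Require Import structures.
From mathcomp Require Import all_boot all_order all_algebra.
Set Implicit Arguments.
Unset Strict Implicit.
Unset Printing Implicit Defensive.
Import Order.TTheory GRing.Theory Num.Theory.
Local Open Scope ring_scope.

Definition hdot (C : numClosedFieldType) (n : nat) (H : 'M[C]_n)
    (a b : 'cV[C]_n) : C :=
  ((map_mx Num.conj b)^T *m H *m a) 0 0.

Definition hermitian_metric (C : numClosedFieldType) (n : nat) (H : 'M[C]_n)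
    : Prop :=
  (forall a b : 'cV[C]_n, hdot H a b = (hdot H b a)^*) /\
  (forall a : 'cV[C]_n, a != 0 -> 0 < hdot H a a).

Definition orthonormal_basis (C : numClosedFieldType) (n : nat)
    (H : 'M[C]_n) (e : 'I_n -> 'cV[C]_n) : Prop :=
  forall i j : 'I_n, hdot H (e i) (e j) = (i == j)%:R.

(* U a b c d stands for u_x(a, \bar b, c, \bar d).  A real tensor of
   curvature type (skew in each pair, J-invariant in each pair), extended
   complex-multilinearly, is exactly determined by such a U which is
   C-linear in a and c, conjugate-linear in b and d, and satisfies the
   reality condition  conj (u(a,\bar b,c,\bar d)) = u(b,\bar a,d,\bar c). *)
Definition curvature_type (C : numClosedFieldType) (n : nat)
    (U : 'cV[C]_n -> 'cV[C]_n -> 'cV[C]_n -> 'cV[C]_n -> C) : Prop :=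
  [/\ (forall (k : C) a a' b c d,
         U (k *: a + a') b c d = k * U a b c d + U a' b c d),
      (forall (k : C) a b b' c d,
         U a (k *: b + b') c d = k^* * U a b c d + U a b' c d),
      (forall (k : C) a b c c' d,
         U a b (k *: c + c') d = k * U a b c d + U a b c' d),
      (forall (k : C) a b c d d',
         U a b c (k *: d + d') = k^* * U a b c d + U a b c d') &
      (forall a b c d, (U a b c d)^* = U b a d c)].

Definition curv_nonneg (C : numClosedFieldType) (n : nat)
    (U : 'cV[C]_n -> 'cV[C]_n -> 'cV[C]_n -> 'cV[C]_n -> C) : Prop :=
  forall xi eta : 'cV[C]_n, 0 <= U xi xi eta eta.

(* Since U >= 0 vanishes at (xi, eta), for real t the function
   t |-> U (xi + t A) (xi + t A) (eta + t B) (eta + t B) is nonnegative with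
   a zero at t = 0, so its t^2-coefficient is nonnegative; adding the same
   statement for (iA, -iB) shows that the Hermitian form
     (A, B) |-> U A A eta eta + U xi xi B B + 2 Re (U A xi B eta)
   is positive semidefinite.  In the family e its matrix M = [[X, Y], [Y^*, Z]]
   is therefore positive semidefinite, and so is N = Q M^T Q^* for
   Q = [[0, 1], [-1, 0]].  The sum in question is tr(M N) / 2, and the trace
   of a product of two positive semidefinite matrices is nonnegative. *)

From HB Require Import structures.
From mathcomp Require Import all_boot all_order all_algebra.
From mathcomp Require Import sesquilinear spectral.
From mathcomp Require Import ring.
Import Order.TTheory GRing.Theory Num.Theory.
Set Implicit Arguments.
Unset Strict Implicit.
Unset Printing Implicit Defensive.
Local Open Scope ring_scope.
Local Open Scope sesquilinear_scope.

Section PositiveSemidefinite.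
Variable C : numClosedFieldType.

Definition hform p q (u : 'rV[C]_p) (A : 'M[C]_(p, q)) (w : 'rV[C]_q) : C :=
  (u *m A *m w ^t*) 0 0.

Definition psdmx m (A : 'M[C]_m) : Prop := forall v, 0 <= hform v A v.

Lemma hformE p q u (A : 'M[C]_(p, q)) w :
  hform u A w = \sum_i \sum_j u 0 i * A i j * (w 0 j)^*.
Proof.
rewrite /hform mxE exchange_big /=; apply: eq_bigr => j _.
by rewrite [(u *m A) 0 j]mxE big_distrl; apply: eq_bigr => i _; rewrite !mxE.
Qed.

Lemma hform_block m1 m2 (a : 'rV[C]_m1) (c : 'rV[C]_m2) P Q R S :
  hform (row_mx a c) (block_mx P Q R S) (row_mx a c) =
  hform a P a + hform c R a + hform a Q c + hform c S c.
Proof.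
rewrite /hform tr_row_mx map_col_mx mul_row_block mul_row_col !mulmxDl.
by rewrite !mxE addrA.
Qed.

Lemma hform_trmx p q u (A : 'M[C]_(p, q)) w :
  hform u A^T w = hform (map_mx Num.conj w) A (map_mx Num.conj u).
Proof.
rewrite !hformE exchange_big; apply: eq_bigr => j _; apply: eq_bigr => i _.
by rewrite !mxE conjCK; ring.
Qed.

Lemma hform_mul m p (P : 'M[C]_(p, m)) u (A : 'M[C]_m) w :
  hform u (P *m A *m P ^t*) w = hform (u *m P) A (w *m P).
Proof. by rewrite /hform trmx_mul map_mxM !mulmxA. Qed.

Lemma hform_delta m (A : 'M[C]_m) k :
  hform (delta_mx 0 k) A (delta_mx 0 k) = A k k.
Proof.
by rewrite /hform -rowE trmx_delta map_delta_mx ?conjC0 ?conjC1 // -colE !mxE.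
Qed.

Lemma psdmx_diag_ge0 m (A : 'M[C]_m) k : psdmx A -> 0 <= A k k.
Proof. by move=> psdA; rewrite -hform_delta. Qed.

Lemma psdmx_trmx m (A : 'M[C]_m) : psdmx A -> psdmx A^T.
Proof. by move=> psdA v; rewrite hform_trmx. Qed.

Lemma psdmx_mul m p (P : 'M[C]_(p, m)) A : psdmx A -> psdmx (P *m A *m P ^t*).
Proof. by move=> psdA v; rewrite hform_mul. Qed.

Lemma mxtrace_mulE p q (A : 'M[C]_(p, q)) (B : 'M[C]_(q, p)) :
  \tr (A *m B) = \sum_i \sum_j A i j * B j i.
Proof. by apply: eq_bigr => i _; rewrite mxE. Qed.

Lemma mxtrace_mul_psd_ge0 m (A B : 'M[C]_m) :
  A \is hermsymmx -> psdmx A -> psdmx B -> 0 <= \tr (A *m B).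
Proof.
move=> hermA psdA psdB; set P := spectralmx A; set d := spectral_diag A.
have unitP : P \is unitarymx := spectral_unitarymx A.
have /orthomx_spectralP : A \is normalmx by exact: hermitian_normalmx.
rewrite invmx_unitary // -/P -/d => defA.
have defD : diag_mx d = P *m A *m P ^t*.
  by rewrite defA !mulmxA (unitarymxP unitP) mul1mx mulmxtVK.
rewrite defA -!mulmxA mxtrace_mulC -!mulmxA mul_diag_mx mulmxA.
rewrite /mxtrace; apply: sumr_ge0 => k _; rewrite mxE mulr_ge0 //.
  by have := psdmx_diag_ge0 k (psdmx_mul P psdA); rewrite -defD mxE eqxx mulr1n.
exact: psdmx_diag_ge0 (psdmx_mul P psdB).
Qed.

End PositiveSemidefinite.

Section Semilinear.
Variables (R : pzRingType) (V : lmodType R) (s : R -> R) (f : V -> R).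
Hypothesis f_semilinear : forall k a a', f (k *: a + a') = s k * f a + f a'.
Hypothesis s1 : s 1 = 1.

Lemma semilinearD a a' : f (a + a') = f a + f a'.
Proof. by rewrite -[a in LHS]scale1r f_semilinear s1 mul1r. Qed.

Lemma semilinear0 : f 0 = 0.
Proof. by apply: (@addIr _ (f 0)); rewrite -semilinearD !addr0 add0r. Qed.

Lemma semilinearZ k a : f (k *: a) = s k * f a.
Proof. by rewrite -[k *: a]addr0 f_semilinear semilinear0 addr0. Qed.

Lemma semilinear_sum (I : Type) (r : seq I) (P : pred I) (k : I -> R)
    (e : I -> V) :
  f (\sum_(i <- r | P i) k i *: e i) = \sum_(i <- r | P i) s (k i) * f (e i).
Proof.
rewrite (big_morph f semilinearD semilinear0).
by apply: eq_bigr => i _; exact: semilinearZ.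
Qed.

End Semilinear.

Lemma ge0_of_forall_addr_pmul (R : numFieldType) (K c : R) :
  0 <= c -> (forall s, 0 < s -> 0 <= K + s * c) -> 0 <= K.
Proof.
move=> c_ge0 Kc_ge0.
have K_real : K \is Num.real.
  by rewrite -[K](addrK c) -[c in K + c]mul1r rpredB ?ger0_real ?Kc_ge0.
rewrite real_leNgt ?rpred0 //; apply/negP => K_lt0.
have cK_gt0 : 0 < c - K by rewrite subr_gt0 (lt_le_trans K_lt0).
have NK_gt0 : 0 < - K by rewrite oppr_gt0.
have := Kc_ge0 (- K / (c - K)) (divr_gt0 NK_gt0 cK_gt0).
have -> : K + - K / (c - K) * c = - ((- K) * (- K) / (c - K)).
  by field; rewrite gt_eqF.
by rewrite oppr_ge0 lt_geF // divr_gt0 // mulr_gt0.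
Qed.

Section CurvatureTensor.
Variables (C : numClosedFieldType) (n : nat).
Variable U : 'cV[C]_n -> 'cV[C]_n -> 'cV[C]_n -> 'cV[C]_n -> C.
Hypothesis U_curv : curvature_type U.

Let U1 b c d k a a' : U (k *: a + a') b c d = k * U a b c d + U a' b c d.
Proof. by case: U_curv. Qed.
Let U2 a c d k b b' : U a (k *: b + b') c d = k^* * U a b c d + U a b' c d.
Proof. by case: U_curv. Qed.
Let U3 a b d k c c' : U a b (k *: c + c') d = k * U a b c d + U a b c' d.
Proof. by case: U_curv. Qed.
Let U4 a b c k d d' : U a b c (k *: d + d') = k^* * U a b c d + U a b c d'.
Proof. by case: U_curv. Qed.

Lemma U_conj a b c d : (U a b c d)^* = U b a d c.
Proof. by case: U_curv. Qed.

Lemma UD1 a a' b c d : U (a + a') b c d = U a b c d + U a' b c d.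
Proof. exact: (semilinearD (U1 b c d)). Qed.
Lemma UD2 a b b' c d : U a (b + b') c d = U a b c d + U a b' c d.
Proof. exact: (semilinearD (U2 a c d) (conjC1 _)). Qed.
Lemma UD3 a b c c' d : U a b (c + c') d = U a b c d + U a b c' d.
Proof. exact: (semilinearD (U3 a b d)). Qed.
Lemma UD4 a b c d d' : U a b c (d + d') = U a b c d + U a b c d'.
Proof. exact: (semilinearD (U4 a b c) (conjC1 _)). Qed.

Lemma UZ1 k a b c d : U (k *: a) b c d = k * U a b c d.
Proof. exact: (semilinearZ (U1 b c d)). Qed.
Lemma UZ2 k a b c d : U a (k *: b) c d = k^* * U a b c d.
Proof. exact: (semilinearZ (U2 a c d) (conjC1 _)). Qed.
Lemma UZ3 k a b c d : U a b (k *: c) d = k * U a b c d.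
Proof. exact: (semilinearZ (U3 a b d)). Qed.
Lemma UZ4 k a b c d : U a b c (k *: d) = k^* * U a b c d.
Proof. exact: (semilinearZ (U4 a b c) (conjC1 _)). Qed.

Lemma U_sum1 (I : finType) (k : I -> C) e b c d :
  U (\sum_i k i *: e i) b c d = \sum_i k i * U (e i) b c d.
Proof. exact: (semilinear_sum (U1 b c d)). Qed.
Lemma U_sum2 (I : finType) (k : I -> C) e a c d :
  U a (\sum_i k i *: e i) c d = \sum_i (k i)^* * U a (e i) c d.
Proof. exact: (semilinear_sum (U2 a c d) (conjC1 _)). Qed.
Lemma U_sum3 (I : finType) (k : I -> C) e a b d :
  U a b (\sum_i k i *: e i) d = \sum_i k i * U a b (e i) d.
Proof. exact: (semilinear_sum (U3 a b d)). Qed.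
Lemma U_sum4 (I : finType) (k : I -> C) e a b c :
  U a b c (\sum_i k i *: e i) = \sum_i (k i)^* * U a b c (e i).
Proof. exact: (semilinear_sum (U4 a b c) (conjC1 _)). Qed.

Variables xi eta : 'cV[C]_n.

Definition second_variation A B :=
  U A A eta eta + U xi xi B B + U A xi eta B + U xi A B eta
  + U A xi B eta + U xi A eta B.

Definition hermitian_variation A B :=
  U A A eta eta + U xi xi B B + U A xi B eta + U xi A eta B.

Lemma variation_even_part (t : C) A B : t^* = t ->
  U (xi + t *: A) (xi + t *: A) (eta + t *: B) (eta + t *: B)
  + U (xi + (- t) *: A) (xi + (- t) *: A) (eta + (- t) *: B) (eta + (- t) *: B)
  = 2 * U xi xi eta eta + 2 * t ^+ 2 * second_variation A B
    + 2 * t ^+ 4 * U A A B B.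
Proof.
move=> t_real; have Nt_real : (- t)^* = - t by rewrite rmorphN /= t_real.
rewrite !(UD1, UD2, UD3, UD4) !(UZ1, UZ2, UZ3, UZ4) Nt_real t_real.
rewrite /second_variation; ring.
Qed.

Hypothesis U_ge0 : curv_nonneg U.
Hypothesis U_xi_eta : U xi xi eta eta = 0.

Lemma second_variation_ge0 A B : 0 <= second_variation A B.
Proof.
apply: (ge0_of_forall_addr_pmul (U_ge0 A B)) => s s_gt0.
set t := sqrtC s; have t_ge0 : 0 <= t by rewrite sqrtC_ge0 ltW.
have := variation_even_part A B (geC0_conj t_ge0).
rewrite U_xi_eta mulr0 add0r sqrtCK -[4%N]/(2 * 2)%N exprM sqrtCK => sum_eq.
have : 0 <= 2 * s * (second_variation A B + s * U A A B B).
  have -> : 2 * s * (second_variation A B + s * U A A B B)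
      = 2 * s * second_variation A B + 2 * s ^+ 2 * U A A B B by ring.
  by rewrite -sum_eq addr_ge0.
by rewrite pmulr_rge0 // mulr_gt0 // ltr0n.
Qed.

Lemma hermitian_variation_ge0 A B : 0 <= hermitian_variation A B.
Proof.
have i2 : 'i * 'i = -1 :> C by rewrite -expr2 sqrCi.
have sum_eq : second_variation A B + second_variation ('i *: A) ((- 'i) *: B)
    = 2 * hermitian_variation A B.
  rewrite /second_variation /hermitian_variation !(UZ1, UZ2, UZ3, UZ4).
  rewrite rmorphN /= conjCi opprK !(mulrN, mulNr, opprK, mulrA) i2.
  ring.
have := addr_ge0 (second_variation_ge0 A B)
  (second_variation_ge0 ('i *: A) ((- 'i) *: B)).
by rewrite sum_eq pmulr_rge0 // ltr0n.
Qed.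

Variables (m : nat) (e : 'I_m -> 'cV[C]_n).

Definition curv_eta_mx := \matrix_(i, j) U (e i) (e j) eta eta.
Definition curv_xi_mx := \matrix_(i, j) U xi xi (e j) (e i).
Definition curv_mixed_mx := \matrix_(i, j) U (e i) xi (e j) eta.

Definition variation_mx : 'M_(m + m) :=
  block_mx curv_eta_mx curv_mixed_mx (curv_mixed_mx ^t*) curv_xi_mx.

Definition dual_variation_mx : 'M_(m + m) :=
  block_mx curv_xi_mx^T (- curv_mixed_mx^T)
           (- map_mx Num.conj curv_mixed_mx) curv_eta_mx^T.

Lemma variation_mx_herm : variation_mx \is hermsymmx.
Proof.
apply/is_hermitianmxP; rewrite expr0 scale1r tr_block_mx map_block_mx.
by congr block_mx; apply/matrixP => i j; rewrite !mxE ?U_conj ?conjCK.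
Qed.

Lemma hform_variation_mx a c :
  hform (row_mx a c) variation_mx (row_mx a c) =
  hermitian_variation (\sum_i a 0 i *: e i) (\sum_i (c 0 i)^* *: e i).
Proof.
rewrite hform_block /hermitian_variation.
have -> : U (\sum_i a 0 i *: e i) (\sum_i a 0 i *: e i) eta eta
    = hform a curv_eta_mx a.
  rewrite U_sum1 hformE; apply: eq_bigr => i _; rewrite U_sum2 big_distrr /=.
  by apply: eq_bigr => j _; rewrite !mxE; ring.
have -> : U xi xi (\sum_i (c 0 i)^* *: e i) (\sum_i (c 0 i)^* *: e i)
    = hform c curv_xi_mx c.
  rewrite U_sum3 hformE exchange_big; apply: eq_bigr => i _.
  rewrite U_sum4 big_distrr /=; apply: eq_bigr => j _.
  by rewrite !mxE conjCK; ring.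
have -> : U (\sum_i a 0 i *: e i) xi (\sum_i (c 0 i)^* *: e i) eta
    = hform a curv_mixed_mx c.
  rewrite U_sum1 hformE; apply: eq_bigr => i _; rewrite U_sum3 big_distrr /=.
  by apply: eq_bigr => j _; rewrite !mxE; ring.
have -> : U xi (\sum_i a 0 i *: e i) eta (\sum_i (c 0 i)^* *: e i)
    = hform c (curv_mixed_mx ^t*) a.
  rewrite U_sum2 hformE exchange_big; apply: eq_bigr => i _.
  rewrite U_sum4 big_distrr /=; apply: eq_bigr => j _.
  by rewrite !mxE U_conj conjCK; ring.
ring.
Qed.

Lemma variation_mx_psd : psdmx variation_mx.
Proof.
by move=> v; rewrite -(hsubmxK v) hform_variation_mx hermitian_variation_ge0.
Qed.

Lemma dual_variation_mxE (Q : 'M[C]_(m + m) := block_mx 0 1%:M (- 1%:M) 0) :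
  dual_variation_mx = Q *m variation_mx^T *m Q ^t*.
Proof.
have -> : Q ^t* = block_mx 0 (- 1%:M) 1%:M 0.
  rewrite /Q tr_block_mx map_block_mx !trmx0 !map_mx0 raddfN /= map_mxN.
  by rewrite !tr_scalar_mx map_scalar_mx rmorph1.
rewrite /Q /variation_mx tr_block_mx !mulmx_block.
rewrite !(mul0mx, mulmx0, mul1mx, mulmx1, mulNmx, mulmxN, addr0, add0r, opprK).
by rewrite map_trmx trmxK.
Qed.

Lemma mxtrace_variation_mul :
  \tr (variation_mx *m dual_variation_mx) = 2 * \sum_i \sum_j
    (U xi xi (e i) (e j) * U (e j) (e i) eta eta
     - U xi (e i) eta (e j) * U (e j) xi (e i) eta).
Proof.
rewrite mulmx_block mxtrace_block !mxtraceD !mxtrace_mulE -!big_split /=.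
rewrite exchange_big mulr_sumr; apply: eq_bigr => i _.
rewrite -!big_split mulr_sumr; apply: eq_bigr => j _ /=.
by rewrite !mxE !U_conj; ring.
Qed.

Lemma curvature_trace_ge0 : 0 <= \sum_i \sum_j
    (U xi xi (e i) (e j) * U (e j) (e i) eta eta
     - U xi (e i) eta (e j) * U (e j) xi (e i) eta).
Proof.
have psdN : psdmx dual_variation_mx.
  by rewrite dual_variation_mxE; apply/psdmx_mul/psdmx_trmx/variation_mx_psd.
have := mxtrace_mul_psd_ge0 variation_mx_herm variation_mx_psd psdN.
by rewrite mxtrace_variation_mul pmulr_rge0 // ltr0n.
Qed.

End CurvatureTensor.

Theorem corollary4p4 (C : numClosedFieldType) (n : nat) (H : 'M[C]_n)
    (U : 'cV[C]_n -> 'cV[C]_n -> 'cV[C]_n -> 'cV[C]_n -> C)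
    (xi eta : 'cV[C]_n) (e : 'I_n -> 'cV[C]_n) :
  hermitian_metric H ->
  curvature_type U ->
  curv_nonneg U ->
  U xi xi eta eta = 0 ->
  orthonormal_basis H e ->
  0 <= \sum_(i < n) \sum_(j < n)
         (U xi xi (e i) (e j) * U (e j) (e i) eta eta
          - U xi (e i) eta (e j) * U (e j) xi (e i) eta).
Proof.
move=> _ U_curv U_ge0 U_xi_eta _.
exact: curvature_trace_ge0.
Qed.
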